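(* Let $a$ and $b$ be coprime odd integers, let $\beta\geq 0$ be an integer, and let $\gamma$ be a positive integer such that $2^\gamma\,\|\,(a+b)$. Then: 1) If $\gamma<\beta$, then $G_{(a,b)}(\beta)=\emptyset$. 2) If $2\leq\beta\leq\gamma$, then $G_{(a,b)}(\gamma)=\{d\in\mathbb{N} : d=1 \text{ or } d \text{ is odd and } 2\,\|\,\operatorname{ord}_p(\tfrac{a}{b}) \text{ for every prime } p \text{ dividing } d\}$, and for $2\leq\beta<\gamma$, $G_{(a,b)}(\beta)=\bigcup_{i=0}^{\gamma-\beta}\{d2^i : d\in G_{(a,b)}(\gamma)\}=G_{(a,b)}(\beta+1)\cup\{d2^{\gamma-\beta} : d\in G_{(a,b)}(\gamma)\}$. 3) If $\beta\in\{0,1\}$, then $G_{(a,b)}(1)=\{2d : d\in G_{(a,b)}(2)\}\cup\{d\in\mathbb{N} : d=1 \text{ or } d \text{ is odd and there exists } s\geq1 \text{ such that } 2^s\,\|\,\operatorname{ord}_p(\tfrac{a}{b}) \text{ for every prime } p \text{ dividing } d\}$ and $G_{(a,b)}(0)=G_{(a,b)}(1)\cup\{2d : d\in G_{(a,b)}(1)\}$.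
   Context: For coprime nonzero integers $a,b$ and an integer $\beta\geq0$, $G_{(a,b)}(\beta)$ is the set of positive integers $d$ such that $2^\beta d\mid(a^k+b^k)$ for some positive integer $k$. For $n$ coprime to $ab$, $\operatorname{ord}_n(\frac{a}{b})$ denotes the multiplicative order of $ab^{-1}$ modulo $n$ (conditions on $\operatorname{ord}_p(\frac ab)$ presuppose that it is defined). $2^\gamma\,\|\,m$ means $2^\gamma\mid m$ and $2^{\gamma+1}\nmid m$. *)

From mathcomp Require Import all_boot all_order all_algebra.
Set Implicit Arguments. Unset Strict Implicit. Unset Printing Implicit Defensive.
Import Order.TTheory GRing.Theory Num.Theory.
Local Open Scope ring_scope.

Definition pow2_exact (g : nat) (m : int) : Prop :=
  (((2 ^ g)%N)%:Z %| m)%Z /\ ~ (((2 ^ g.+1)%N)%:Z %| m)%Z.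

Definition G (a b : int) (beta : nat) (d : nat) : Prop :=
  (0 < d)%N /\ exists k : nat, (0 < k)%N /\
     ((((2 ^ beta) * d)%N)%:Z %| a ^+ k + b ^+ k)%Z.

Definition is_mult_order (n : nat) (x : int) (k : nat) : Prop :=
  (0 < k)%N /\ (n%:Z %| x ^+ k - 1)%Z /\
  forall j : nat, (0 < j)%N -> (j < k)%N -> ~ (n%:Z %| x ^+ j - 1)%Z.

(* k = ord_n(a/b): n coprime to ab (so that a b^{-1} mod n is defined) and
   k is the multiplicative order of r, where r represents a b^{-1} mod n,
   i.e. r * b = a (mod n). *)
Definition ord_ab (n : nat) (a b : int) (k : nat) : Prop :=
  coprimez n%:Z (a * b) /\
  exists r : int, (n%:Z %| r * b - a)%Z /\ is_mult_order n r k.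

Definition S_two (a b : int) (d : nat) : Prop :=
  d = 1%N \/ (odd d /\ forall p : nat, prime p -> (p %| d)%N ->
      exists k, ord_ab p a b k /\ pow2_exact 1 k%:Z).

Definition S_three (a b : int) (d : nat) : Prop :=
  d = 1%N \/ (odd d /\ exists s : nat, (1 <= s)%N /\
      forall p : nat, prime p -> (p %| d)%N ->
      exists k, ord_ab p a b k /\ pow2_exact s k%:Z).

From mathcomp Require Import all_boot all_order all_algebra zify ring.
Set Implicit Arguments.
Unset Strict Implicit.
Unset Printing Implicit Defensive.
Import Order.TTheory GRing.Theory Num.Theory.
Local Open Scope ring_scope.

(* For odd a and b, the 2-adic valuation of a^k + b^k equals that of a + b when k is
   odd (the cofactor of a + b is a sum of k odd terms) and equals 1 when k is even
   (odd squares are 1 modulo 4). So 2^beta d with beta >= 2 can only divide a^k + b^k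
   for odd k, and then only if beta <= gamma; this gives 1) and reduces 2) to odd d.
   An odd prime p divides a^k + b^k iff ord_p(a/b) divides 2k but not k, which forces
   v_2(ord_p(a/b)) = v_2(k) + 1. Conversely, if 2^s || ord_p(a/b) then p divides
   a^t + b^t for t = 2^(s-1) times an odd number. As x + y divides x^o + y^o for odd o,
   such exponents combine over the distinct primes of d, and prime powers are reached
   by lifting the exponent: p | x + y implies p (x + y) | x^p + y^p. *)

Lemma dvdz2M (x y : int) : (2 %| x * y)%Z = (2 %| x)%Z || (2 %| y)%Z.
Proof. by rewrite !dvdzE abszM Euclid_dvdM. Qed.

Lemma dvdz2X (x : int) k : (2 %| x ^+ k)%Z = (0 < k)%N && (2 %| x)%Z.
Proof. by rewrite !dvdzE abszX Euclid_dvdX // andbC. Qed.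

Lemma oddzX (x : int) k : ~~ (2 %| x)%Z -> ~~ (2 %| x ^+ k)%Z.
Proof. by move=> x_odd; rewrite dvdz2X negb_and x_odd orbT. Qed.

Lemma dvdz2D_odd (x y : int) : ~~ (2 %| x)%Z -> ~~ (2 %| y)%Z -> (2 %| x + y)%Z.
Proof. lia. Qed.

Lemma ndvdz4_sqrD_odd (x y : int) : ~~ (2 %| x)%Z -> ~~ (2 %| y)%Z ->
  ~~ (4 %| x ^+ 2 + y ^+ 2)%Z.
Proof. rewrite !expr2; nia. Qed.

Lemma coprimez_pow2l n (y : int) : ~~ (2 %| y)%Z -> coprimez (2 ^ n)%N%:Z y.
Proof. by rewrite dvdzE dvdn2 negbK => y_odd; rewrite coprimezE coprimeXl // coprime2n. Qed.

Lemma prime_coprimez p (x : int) : prime p -> coprimez p%:Z x = ~~ (p%:Z %| x)%Z.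
Proof. by move=> p_pr; rewrite coprimezE prime_coprime. Qed.

Lemma primez_dvdX p (x : int) k : prime p -> (p%:Z %| x ^+ k)%Z -> (p%:Z %| x)%Z.
Proof. by move=> p_pr; rewrite !dvdzE abszX Euclid_dvdX // => /andP[]. Qed.

Lemma dvdz_subXX (x y : int) k : (x - y %| x ^+ k - y ^+ k)%Z.
Proof. by rewrite subrXX dvdz_mulr. Qed.

(* The cofactor is the sum of the u^(k-1-i) (-v)^i, each congruent to u^(k-1) modulo u + v. *)
Lemma addXX_odd_cofactor (u v : int) k : odd k ->
  exists2 c, u ^+ k + v ^+ k = (u + v) * c & (u + v %| c - u ^+ k.-1 *+ k)%Z.
Proof.
move=> k_odd; have := subrXX u (- v) k.
rewrite opprK exprNn -signr_odd k_odd expr1 mulN1r opprK => ->.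
eexists=> //; rewrite -[k in _ *+ k]card_ord -sumr_const -sumrB.
apply: rpred_sum => i _.
have -> : u ^+ k.-1 = u ^+ (k.-1 - i) * u ^+ i.
  by rewrite -exprD subnK // -ltnS prednK ?odd_gt0.
rewrite -mulrBr dvdz_mull // -opprB rpredN.
by have := dvdz_subXX u (- v) i; rewrite opprK.
Qed.

Lemma dvdz_addXX (u v : int) k : odd k -> (u + v %| u ^+ k + v ^+ k)%Z.
Proof. by case/(addXX_odd_cofactor u v) => c -> _; rewrite dvdz_mulr. Qed.

Lemma dvdz_mul_addXX (u v : int) n : odd n -> (n%:Z %| u + v)%Z ->
  (n%:Z * (u + v) %| u ^+ n + v ^+ n)%Z.
Proof.
move=> n_odd n_uv; have [c -> hc] := addXX_odd_cofactor u v n_odd.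
rewrite mulrC dvdz_mul //.
have n_un : (n%:Z %| u ^+ n.-1 *+ n)%Z by rewrite -mulr_natr natz dvdz_mull.
by rewrite -(rpredBr _ n_un) (dvdz_trans n_uv hc).
Qed.

Lemma pow2_exact_leq g j (x : int) : pow2_exact g x ->
  ((2 ^ j)%N%:Z %| x)%Z -> (j <= g)%N.
Proof.
case=> _ gx1 jx; rewrite leqNgt; apply/negP => gj; apply: gx1.
by apply: dvdz_trans jx; apply: dvdn_exp2l.
Qed.

Lemma pow2_exact_mulr_odd g (x y : int) : pow2_exact g x -> ~~ (2 %| y)%Z ->
  pow2_exact g (x * y).
Proof.
case=> gx gx1 y_odd; split; first exact: dvdz_mulr.
by rewrite Gauss_dvdzl // coprimez_pow2l.
Qed.

Lemma pow2_exact_natE v m : (0 < m)%N -> pow2_exact v m%:Z <-> logn 2 m = v.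
Proof.
move=> m_gt0; change ((2 ^ v %| m)%N /\ ~ (2 ^ v.+1 %| m)%N <-> logn 2 m = v).
rewrite !pfactor_dvdn //; split=> [[vm /negP]|<-]; last by rewrite ltnn.
by rewrite -leqNgt => mv; apply/eqP; rewrite eqn_leq mv.
Qed.

Lemma logn2_dvd_double m k : (0 < k)%N -> (m %| 2 * k)%N -> ~~ (m %| k)%N ->
  logn 2 m = (logn 2 k).+1.
Proof.
move=> k_gt0 m_2k m_k; have k2_gt0 : (0 < 2 * k)%N by rewrite muln_gt0 k_gt0.
have m_gt0 := dvdn_gt0 k2_gt0 m_2k.
have := dvdn_leq_log 2 k2_gt0 m_2k; rewrite lognM // (logn_prime _ (isT : prime 2)).
rewrite leq_eqVlt ltnS => /orP[/eqP //|wk]; case/negP: m_k.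
have [mo] := pfactor_coprime (isT : prime 2) m_gt0; rewrite coprime_sym => mo_odd m_eq.
rewrite m_eq Gauss_dvd ?coprimeXr // -(@Gauss_dvdr mo 2 k mo_odd) pfactor_dvdn // wk andbT.
by apply: dvdn_trans m_2k; rewrite [X in (_ %| X)%N]m_eq dvdn_mulr.
Qed.

Lemma is_mult_order_dvdn n (r : int) m j : is_mult_order n r m ->
  (m %| j)%N = (n%:Z %| r ^+ j - 1)%Z.
Proof.
case=> m_gt0 [nm m_min]; have r_pow1 i : (n%:Z %| (r ^+ m) ^+ i - 1)%Z.
  by apply: dvdz_trans nm _; rewrite -[1 in X in (_ %| X)%Z](expr1n _ i) dvdz_subXX.
apply/idP/idP => [/dvdnP[q ->]|nj]; first by rewrite mulnC exprM r_pow1.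
have : (n%:Z %| r ^+ (j %% m) - 1)%Z.
  have -> : r ^+ (j %% m) - 1 = (r ^+ j - 1) - r ^+ (j %% m) * ((r ^+ m) ^+ (j %/ m) - 1).
    by rewrite {2}(divn_eq j m) exprD mulnC exprM; ring.
  by rewrite rpredB // dvdz_mull // r_pow1.
case: (posnP (j %% m)) => [jm0|jm_gt0]; first by rewrite /dvdn jm0.
by move/(m_min _ jm_gt0 (ltn_pmod j m_gt0)).
Qed.

Lemma dvdz_subXX_ratio n (a b r : int) j : coprimez n%:Z b -> (n%:Z %| r * b - a)%Z ->
  (n%:Z %| r ^+ j - 1)%Z = (n%:Z %| a ^+ j - b ^+ j)%Z.
Proof.
move=> nb nr; rewrite -(Gauss_dvdzr _ (coprimezXr j nb)).
have -> : b ^+ j * (r ^+ j - 1) = ((r * b) ^+ j - a ^+ j) + (a ^+ j - b ^+ j).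
  by rewrite exprMn; ring.
by rewrite rpredDl // (dvdz_trans nr (dvdz_subXX _ _ _)).
Qed.

Lemma ord_ab_gt0 n a b m : ord_ab n a b m -> (0 < m)%N.
Proof. by case=> _ [r [_ []]]. Qed.

Lemma ord_ab_dvdn n a b m j : ord_ab n a b m ->
  (m %| j)%N = (n%:Z %| a ^+ j - b ^+ j)%Z.
Proof.
case=> + [r [nr r_ord]]; rewrite coprimezMr => /andP[_ nb].
by rewrite (is_mult_order_dvdn j r_ord) (dvdz_subXX_ratio j nb nr).
Qed.

Lemma ord_ab_exists n a b j : coprimez n%:Z (a * b) -> (0 < j)%N ->
  (n%:Z %| a ^+ j - b ^+ j)%Z -> exists m, ord_ab n a b m.
Proof.
move=> nab j_gt0 nj; have /andP[_ nb] : coprimez n a && coprimez n b by rewrite -coprimezMr.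
have [[u v] /= uv] := coprimezP _ _ nb.
have nr : (n%:Z %| a * v * b - a)%Z.
  have -> : a * v * b - a = a * (u * n%:Z + v * b - 1) - a * u * n%:Z by ring.
  by rewrite uv subrr mulr0 sub0r rpredN dvdz_mull.
pose P i := (0 < i)%N && (n%:Z %| (a * v) ^+ i - 1)%Z.
have : exists i, P i by exists j; rewrite /P j_gt0 (dvdz_subXX_ratio j nb nr).
case/ex_minnP=> m /andP[m_gt0 nm] m_min; exists m; split=> //; exists (a * v).
split=> //; split=> //; split=> // i i_gt0 im ni.
by have := m_min i; rewrite /P i_gt0 ni leqNgt im => /(_ isT).
Qed.

Lemma prime_dvd_addXX_coprime p a b k : coprimez a b -> prime p -> (0 < k)%N ->
  (p%:Z %| a ^+ k + b ^+ k)%Z -> coprimez p%:Z b.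
Proof.
move=> ab p_pr k_gt0 p_sum; rewrite prime_coprimez //; apply/negP => pb.
have pa : (p%:Z %| a)%Z.
  apply: (@primez_dvdX p a k p_pr).
  by rewrite -(rpredDr _ (dvdz_exp k_gt0 pb)).
have : (p%:Z %| gcdz a b)%Z by rewrite dvdz_gcd pa.
by rewrite (eqP ab) dvdz1 /= => /eqP p1; rewrite p1 in p_pr.
Qed.

Lemma ord_ab_of_dvd_addXX p a b k : coprimez a b -> prime p -> odd p -> (0 < k)%N ->
  (p%:Z %| a ^+ k + b ^+ k)%Z -> exists m, ord_ab p a b m /\ pow2_exact (logn 2 k).+1 m%:Z.
Proof.
move=> ab p_pr p_odd k_gt0 p_sum.
have pb := prime_dvd_addXX_coprime ab p_pr k_gt0 p_sum.
have pa : coprimez p%:Z a.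
  rewrite coprimez_sym in ab; rewrite addrC in p_sum.
  exact: prime_dvd_addXX_coprime ab p_pr k_gt0 p_sum.
have p_sub2k : (p%:Z %| a ^+ (2 * k) - b ^+ (2 * k))%Z.
  have -> : a ^+ (2 * k) - b ^+ (2 * k) = (a ^+ k - b ^+ k) * (a ^+ k + b ^+ k).
    by rewrite mulnC !exprM; ring.
  exact: dvdz_mull.
have pab : coprimez p%:Z (a * b) by rewrite coprimezMr pa pb.
have k2_gt0 : (0 < 2 * k)%N by rewrite muln_gt0 k_gt0.
have [m om] := ord_ab_exists pab k2_gt0 p_sub2k.
exists m; split=> //; rewrite pow2_exact_natE ?(ord_ab_gt0 om) //.
apply: logn2_dvd_double k_gt0 _ _; rewrite (ord_ab_dvdn _ om) //.
apply/negP => p_sub.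
have : (p%:Z %| 2 * b ^+ k)%Z.
  have -> : 2 * b ^+ k = (a ^+ k + b ^+ k) - (a ^+ k - b ^+ k) by ring.
  by rewrite rpredB.
rewrite Gauss_dvdzl ?coprimezXr // dvdzE /= dvdn_prime2 // => /eqP p2.
by rewrite p2 in p_odd.
Qed.

Definition dvd_addXX_oddmul (a b : int) (t n : nat) : Prop :=
  exists2 o : nat, odd o & (n%:Z %| a ^+ (t * o) + b ^+ (t * o))%Z.

Lemma dvd_addXX_oddmul_of_ord_ab p a b m s : prime p -> ord_ab p a b m ->
  pow2_exact s m%:Z -> (0 < s)%N -> dvd_addXX_oddmul a b (2 ^ s.-1) p.
Proof.
move=> p_pr om; rewrite pow2_exact_natE ?(ord_ab_gt0 om) // => <- s_gt0.
have [q] := pfactor_coprime (isT : prime 2) (ord_ab_gt0 om).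
rewrite coprime2n => q_odd m_eq; exists q => //.
set t := (2 ^ _ * q)%N.
have mt : m = (2 * t)%N by rewrite {1}m_eq /t -{1}(prednK s_gt0) expnS; ring.
have t_gt0 : (0 < t)%N by rewrite muln_gt0 expn_gt0 (odd_gt0 q_odd).
have : (p%:Z %| (a ^+ t - b ^+ t) * (a ^+ t + b ^+ t))%Z.
  have -> : (a ^+ t - b ^+ t) * (a ^+ t + b ^+ t) = a ^+ m - b ^+ m.
    by rewrite mt mulnC !exprM; ring.
  by rewrite -(ord_ab_dvdn _ om).
rewrite !dvdzE abszM Euclid_dvdM // -!dvdzE -(ord_ab_dvdn _ om) mt.
by rewrite gtnNdvd // ltn_Pmull.
Qed.

(* If p | n, multiplying the exponent by p gains the factor p (lifting the exponent);
   otherwise n and p are coprime and the two odd multipliers combine. *)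
Lemma dvd_addXX_oddmul_mul_prime a b t n p : prime p -> odd p ->
  dvd_addXX_oddmul a b t n -> dvd_addXX_oddmul a b t p -> dvd_addXX_oddmul a b t (n * p).
Proof.
move=> p_pr p_odd [o o_odd hn] [q q_odd hp].
have [pn | pn] := boolP (p %| n)%N.
  exists (o * p)%N; first by rewrite oddM o_odd.
  rewrite mulnA !(exprM _ (t * o)) PoszM.
  have p_sum : (p%:Z %| a ^+ (t * o) + b ^+ (t * o))%Z.
    exact: dvdz_trans (pn : (p%:Z %| n%:Z)%Z) hn.
  apply: dvdz_trans (dvdz_mul_addXX p_odd p_sum).
  by rewrite [X in (_ %| X)%Z]mulrC; apply: dvdz_mul.
exists (o * q)%N; first by rewrite oddM o_odd.
rewrite PoszM Gauss_dvdz; last by rewrite coprimezE coprime_sym prime_coprime.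
apply/andP; split.
  rewrite mulnA (exprM a (t * o)) (exprM b (t * o)).
  exact: dvdz_trans hn (dvdz_addXX _ _ q_odd).
rewrite (mulnC o) mulnA (exprM a (t * q)) (exprM b (t * q)).
exact: dvdz_trans hp (dvdz_addXX _ _ o_odd).
Qed.

Lemma dvd_addXX_oddmul_odd a b t n : odd n ->
  (forall p, prime p -> (p %| n)%N -> dvd_addXX_oddmul a b t p) -> dvd_addXX_oddmul a b t n.
Proof.
elim/ltn_ind: n => n IH n_odd hp.
have [n_le1 | n_gt1] := leqP n 1.
  have -> : n = 1%N by apply/eqP; rewrite eqn_leq n_le1 (odd_gt0 n_odd).
  by exists 1%N; rewrite ?dvd1z.
have p_pr := pdiv_prime n_gt1; have p_n := pdiv_dvd n.
rewrite -(divnK p_n); apply: dvd_addXX_oddmul_mul_prime => //.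
- exact: dvdn_odd p_n n_odd.
- apply: IH; first by rewrite ltn_Pdiv ?prime_gt1 // ltnW.
    exact: dvdn_odd (dvdn_div p_n) n_odd.
  by move=> p' p'_pr /dvdn_trans/(_ (dvdn_div p_n)); apply: hp.
- exact: hp.
Qed.

Lemma G_mul_pow2 a b beta i d : G a b beta (d * 2 ^ i) <-> G a b (beta + i) d.
Proof.
rewrite /G muln_gt0 expn_gt0 /= andbT.
by have -> : (2 ^ beta * (d * 2 ^ i) = 2 ^ (beta + i) * d)%N by rewrite expnD; ring.
Qed.

Lemma G_double a b beta d : G a b beta (2 * d) <-> G a b beta.+1 d.
Proof. by rewrite mulnC -[X in (_ * X)%N]expn1 G_mul_pow2 addn1. Qed.

Lemma G_even a b beta d : ~~ odd d -> G a b beta d <-> G a b beta.+1 d./2.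
Proof. by move=> d_even; rewrite -G_double mul2n even_halfK. Qed.

Lemma G_le a b beta beta' d : (beta <= beta')%N -> G a b beta' d -> G a b beta d.
Proof.
move=> le_beta [d_gt0 [k [k_gt0 hk]]]; split=> //; exists k; split=> //.
by apply: dvdz_trans hk; apply: dvdn_mul (dvdn_exp2l 2 le_beta) (dvdnn d).
Qed.

Lemma G_of_dvdz a b beta d k : odd d -> (0 < k)%N ->
  ((2 ^ beta)%N%:Z %| a ^+ k + b ^+ k)%Z -> (d%:Z %| a ^+ k + b ^+ k)%Z -> G a b beta d.
Proof.
move=> d_odd k_gt0 h2 hd; split; first exact: odd_gt0.
exists k; split=> //; rewrite PoszM Gauss_dvdz ?h2 ?hd //.
by apply: coprimez_pow2l; rewrite dvdzE /= dvdn2 d_odd.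
Qed.

Lemma exists_leqSn (P : nat -> Prop) n :
  (exists i, (i <= n.+1)%N /\ P i) <-> (exists i, (i <= n)%N /\ P i) \/ P n.+1.
Proof.
split=> [[i [le_i Pi]] | [[i [le_i Pi]] | Pn]]; last by exists n.+1.
  by have [lt_i | ge_i] := ltnP i n.+1; [left; exists i | right; have <- : i = n.+1 by lia].
by exists i; split=> //; apply: leqW.
Qed.

Section OddPair.

Variables a b : int.
Hypotheses (a_odd : ~~ (2 %| a)%Z) (b_odd : ~~ (2 %| b)%Z) (ab_coprime : coprimez a b).

Lemma dvdz2_addXX k : ((2 ^ 1)%N%:Z %| a ^+ k + b ^+ k)%Z.
Proof. by rewrite expn1 dvdz2D_odd ?oddzX. Qed.

Lemma odd_exp_of_dvdz4_addXX k : (4 %| a ^+ k + b ^+ k)%Z -> odd k.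
Proof.
apply: contraLR => k_even.
rewrite -[k](even_halfK k_even) -muln2 !exprM.
exact: ndvdz4_sqrD_odd (oddzX _ a_odd) (oddzX _ b_odd).
Qed.

Lemma G_odd_exp beta d : (2 <= beta)%N -> G a b beta d ->
  exists2 k, odd k & (((2 ^ beta) * d)%N%:Z %| a ^+ k + b ^+ k)%Z.
Proof.
move=> beta2 [_ [k [_ hk]]]; exists k => //.
apply: odd_exp_of_dvdz4_addXX; apply: dvdz_trans hk.
by apply: dvdn_mulr; apply: (dvdn_exp2l 2 beta2).
Qed.

Lemma G_zero d : G a b 0 d <-> G a b 1 d \/ exists e, G a b 1 e /\ d = (2 * e)%N.
Proof.
split=> [G0d | [/(G_le (leq0n 1)) // | [e [G1e ->]]]]; last first.
  exact/G_double.
have [d_odd | d_even] := boolP (odd d).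
  left; case: G0d => _ [k [k_gt0 hk]]; apply: G_of_dvdz d_odd k_gt0 (dvdz2_addXX k) _.
  by rewrite expn0 mul1n in hk.
right; exists d./2; split; first exact: (G_even _ _ _ d_even).1 G0d.
by rewrite mul2n even_halfK.
Qed.

Lemma G_one_S_three d : G a b 1 d <-> (exists e, G a b 2 e /\ d = (2 * e)%N) \/ S_three a b d.
Proof.
split=> [G1d | [[e [G2e ->]] | [-> | [d_odd [s [s_gt0 hp]]]]]].
- have [d_odd | d_even] := boolP (odd d); last first.
    left; exists d./2; split; first exact: (G_even _ _ _ d_even).1 G1d.
    by rewrite mul2n even_halfK.
  case: G1d => _ [k [k_gt0 hk]]; right; right; split=> //.
  exists (logn 2 k).+1; split=> // p p_pr p_d.
  apply: ord_ab_of_dvd_addXX => //; first exact: dvdn_odd p_d d_odd.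
  by apply: dvdz_trans hk; apply: dvdn_mull.
- exact/G_double.
- exact: G_of_dvdz (isT : odd 1) (isT : 0 < 1)%N (dvdz2_addXX 1) (dvd1z _).
have [o o_odd hd] : dvd_addXX_oddmul a b (2 ^ s.-1) d.
  apply: dvd_addXX_oddmul_odd d_odd _ => p p_pr p_d.
  have [m [om pm]] := hp p p_pr p_d.
  exact: dvd_addXX_oddmul_of_ord_ab p_pr om pm s_gt0.
apply: G_of_dvdz d_odd _ (dvdz2_addXX _) hd.
by rewrite muln_gt0 expn_gt0 (odd_gt0 o_odd).
Qed.

Variable gamma : nat.
Hypothesis ab_gamma : pow2_exact gamma (a + b).

(* a^k + b^k = (a + b) c with c = k a^(k-1) = 1 modulo 2. *)
Lemma pow2_exact_addXX k : odd k -> pow2_exact gamma (a ^+ k + b ^+ k).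
Proof.
move=> k_odd; have [c -> hc] := addXX_odd_cofactor a b k_odd.
apply: pow2_exact_mulr_odd => //.
have X_odd : ~~ (2 %| a ^+ k.-1 *+ k)%Z.
  by rewrite -mulr_natr natz dvdz2M negb_or oddzX //= dvdzE /= dvdn2 k_odd.
apply: contra X_odd => c_even.
by rewrite -(rpredBl _ c_even) (dvdz_trans (dvdz2D_odd a_odd b_odd) hc).
Qed.

Lemma G_le_gamma beta d : (2 <= beta)%N -> G a b beta d -> (beta <= gamma)%N.
Proof.
move=> beta2 /(G_odd_exp beta2) [k k_odd hk].
apply: pow2_exact_leq (pow2_exact_addXX k_odd) _.
by apply: dvdz_trans hk; apply: dvdn_mulr.
Qed.

Lemma G_gamma_of_odd beta e : (2 <= beta)%N -> odd e -> G a b beta e -> G a b gamma e.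
Proof.
move=> beta2 e_odd /(G_odd_exp beta2) [k k_odd hk].
apply: G_of_dvdz e_odd (odd_gt0 k_odd) (pow2_exact_addXX k_odd).1 _.
by apply: dvdz_trans hk; apply: dvdn_mull.
Qed.

Lemma G_gamma_odd d : (2 <= gamma)%N -> G a b gamma d -> odd d.
Proof.
move=> gamma2 Gd; apply/negPn/negP => d_even.
have Gd2 := (G_even _ _ _ d_even).1 Gd.
by have := G_le_gamma (leqW gamma2) Gd2; rewrite ltnn.
Qed.

Lemma G_gamma_S_two d : (2 <= gamma)%N -> G a b gamma d <-> S_two a b d.
Proof.
move=> gamma2; split=> [Gd | [-> | [d_odd hp]]].
- have d_odd := G_gamma_odd gamma2 Gd; right; split=> // p p_pr p_d.
  have [k k_odd hk] := G_odd_exp gamma2 Gd.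
  rewrite -(logn_coprime (p := 2) (_ : coprime 2 k)) ?coprime2n //.
  apply: ord_ab_of_dvd_addXX (odd_gt0 k_odd) _ => //; first exact: dvdn_odd p_d d_odd.
  by apply: dvdz_trans hk; apply: dvdn_mull.
- exact: G_of_dvdz (isT : odd 1) (isT : 0 < 1)%N ab_gamma.1 (dvd1z _).
have [o o_odd hd] : dvd_addXX_oddmul a b (2 ^ 0) d.
  apply: dvd_addXX_oddmul_odd d_odd _ => p p_pr p_d.
  have [m [om pm]] := hp p p_pr p_d.
  exact: dvd_addXX_oddmul_of_ord_ab p_pr om pm (isT : 0 < 1)%N.
rewrite expn0 mul1n in hd.
exact: G_of_dvdz d_odd (odd_gt0 o_odd) (pow2_exact_addXX o_odd).1 hd.
Qed.

Lemma G_pow2_decomp beta d : (2 <= beta)%N -> (beta <= gamma)%N ->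
  G a b beta d <-> exists i, (i <= gamma - beta)%N /\
    exists e, G a b gamma e /\ d = (e * 2 ^ i)%N.
Proof.
move=> beta2 beta_le; split=> [Gd | [i [le_i [e [Ge ->]]]]]; last first.
  by apply/G_mul_pow2; apply: G_le Ge; rewrite -(leq_subRL _ beta_le).
have [e] := pfactor_coprime (isT : prime 2) Gd.1; rewrite coprime2n => e_odd d_eq.
rewrite d_eq in Gd; move/G_mul_pow2 in Gd.
have beta_i2 : (2 <= beta + logn 2 d)%N by apply: leq_trans beta2 (leq_addr _ _).
exists (logn 2 d); split; first by rewrite (leq_subRL _ beta_le) (G_le_gamma beta_i2 Gd).
by exists e; split=> //; apply: G_gamma_of_odd beta_i2 e_odd Gd.
Qed.

Lemma G_succ_decomp beta d : (2 <= beta)%N -> (beta < gamma)%N ->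
  G a b beta d <->
    G a b beta.+1 d \/ exists e, G a b gamma e /\ d = (e * 2 ^ (gamma - beta))%N.
Proof.
move=> beta2 beta_lt; rewrite (G_pow2_decomp _ beta2 (ltnW beta_lt)).
by rewrite (G_pow2_decomp _ (leqW beta2) beta_lt) -(subnSK beta_lt) exists_leqSn.
Qed.

End OddPair.

Unset Implicit Arguments.

Theorem theorem2p15 (a b : int) (beta gamma : nat) :
  coprimez a b -> ~~ (2 %| a)%Z -> ~~ (2 %| b)%Z ->
  (0 < gamma)%N -> pow2_exact gamma (a + b) ->
  ((gamma < beta)%N -> forall d : nat, ~ G a b beta d) /\
  ((2 <= beta)%N -> (beta <= gamma)%N ->
     forall d : nat, G a b gamma d <-> S_two a b d) /\
  ((2 <= beta)%N -> (beta < gamma)%N ->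
     (forall d : nat, G a b beta d <->
        exists i : nat, (i <= gamma - beta)%N /\
          exists e : nat, G a b gamma e /\ d = (e * 2 ^ i)%N) /\
     (forall d : nat, G a b beta d <->
        G a b beta.+1 d \/
        exists e : nat, G a b gamma e /\ d = (e * 2 ^ (gamma - beta))%N)) /\
  ((beta = 0%N \/ beta = 1%N) ->
     (forall d : nat, G a b 1 d <->
        (exists e : nat, G a b 2 e /\ d = (2 * e)%N) \/ S_three a b d) /\
     (forall d : nat, G a b 0 d <->
        G a b 1 d \/ exists e : nat, G a b 1 e /\ d = (2 * e)%N)).
Proof.
move=> ab a_odd b_odd gamma_gt0 ab_gamma.
split=> [gamma_lt d Gd | ].
  have := G_le_gamma a_odd b_odd ab_gamma (leq_ltn_trans gamma_gt0 gamma_lt) Gd.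
  by rewrite leqNgt gamma_lt.
split=> [beta2 beta_le d | ].
  exact: (G_gamma_S_two a_odd b_odd ab ab_gamma d (leq_trans beta2 beta_le)).
split=> [beta2 beta_lt | _].
  split=> d; first exact: (G_pow2_decomp a_odd b_odd ab_gamma d beta2 (ltnW beta_lt)).
  exact: (G_succ_decomp a_odd b_odd ab_gamma d beta2 beta_lt).
by split=> d; [exact: (G_one_S_three a_odd b_odd ab d) | exact: (G_zero a_odd b_odd d)].
Qed.
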